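(* Let $(\Sigma_+,\Sigma_-,N_1,N_2,N_3)$ be a solution of the Wainwright–Hsu system satisfying the constraint, with $N_1=0$, $N_2,N_3>0$, such that $N_2=N_3$ and $\Sigma_-=0$ never hold simultaneously. Then $\lim_{\tau\to\infty}\Sigma_+=-1$, $\lim_{\tau\to\infty}\Sigma_-=0$ and $\lim_{\tau\to\infty}(N_2-N_3)=0$.
   Context: Wainwright–Hsu system: for functions $N_1,N_2,N_3,\Sigma_+,\Sigma_-$ of $\tau\in\mathbb{R}$ (prime denotes $d/d\tau$), $N_1'=(q-4\Sigma_+)N_1$, $N_2'=(q+2\Sigma_++2\sqrt3\Sigma_-)N_2$, $N_3'=(q+2\Sigma_+-2\sqrt3\Sigma_-)N_3$, $\Sigma_+'=-(2-q)\Sigma_+-3S_+$, $\Sigma_-'=-(2-q)\Sigma_--3S_-$, where $q=2(\Sigma_+^2+\Sigma_-^2)$, $S_+=\frac12[(N_2-N_3)^2-N_1(2N_1-N_2-N_3)]$, $S_-=\frac{\sqrt3}{2}(N_3-N_2)(N_1-N_2-N_3)$, together with the constraint $\Sigma_+^2+\Sigma_-^2+\frac34[N_1^2+N_2^2+N_3^2-2(N_1N_2+N_2N_3+N_1N_3)]=1$. Solutions exist for all $\tau\in\mathbb{R}$. *)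

From Stdlib Require Import Reals.
From Coquelicot Require Import Coquelicot.
Open Scope R_scope.

Definition WH_q (Sp Sm : R) : R := 2 * (Sp ^ 2 + Sm ^ 2).

Definition WH_Splus (N1 N2 N3 : R) : R :=
  / 2 * ((N2 - N3) ^ 2 - N1 * (2 * N1 - N2 - N3)).

Definition WH_Sminus (N1 N2 N3 : R) : R :=
  sqrt 3 / 2 * (N3 - N2) * (N1 - N2 - N3).

Definition WH_solution (N1 N2 N3 Sp Sm : R -> R) : Prop :=
  forall t : R,
    is_derive N1 t ((WH_q (Sp t) (Sm t) - 4 * Sp t) * N1 t) /\
    is_derive N2 t ((WH_q (Sp t) (Sm t) + 2 * Sp t + 2 * sqrt 3 * Sm t) * N2 t) /\
    is_derive N3 t ((WH_q (Sp t) (Sm t) + 2 * Sp t - 2 * sqrt 3 * Sm t) * N3 t) /\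
    is_derive Sp t (- (2 - WH_q (Sp t) (Sm t)) * Sp t
                    - 3 * WH_Splus (N1 t) (N2 t) (N3 t)) /\
    is_derive Sm t (- (2 - WH_q (Sp t) (Sm t)) * Sm t
                    - 3 * WH_Sminus (N1 t) (N2 t) (N3 t)).

Definition WH_constraint (N1 N2 N3 Sp Sm : R -> R) : Prop :=
  forall t : R,
    Sp t ^ 2 + Sm t ^ 2
    + 3 / 4 * (N1 t ^ 2 + N2 t ^ 2 + N3 t ^ 2
               - 2 * (N1 t * N2 t + N2 t * N3 t + N1 t * N3 t)) = 1.

From Stdlib Require Import Reals Lra Psatz Classical.
From Coquelicot Require Import Coquelicot.
Open Scope R_scope.

(* With N1 = 0 the constraint reads Sp^2 + Sm^2 + 3/4 (N2 - N3)^2 = 1 and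
   Sp' = -3/2 (N2 - N3)^2 (1 + Sp), so Sp is nonincreasing in [-1, 1], and it
   suffices to show that Sp gets arbitrarily close to -1; the limits of Sm and
   N2 - N3 then follow from the constraint.  Suppose Sp >= -1 + eps for all
   times.  Then N2 N3 exp(-2 Sp / eps) is nondecreasing, so N2 + N3 stays
   bounded below by some m > 0.  Hence Sm (N2 - N3) / (N2 + N3) is bounded,
   and adding a large multiple of -Sp gives a bounded function whose
   derivative is at least 2 sqrt 3 (1 - Sp^2) >= 2 (1 - Sp(0)) eps > 0; here
   Sp(0) < 1 because N2 = N3 and Sm = 0 never hold together. *)

Lemma MVT_lower_bound (f df : R -> R) (L a b : R) :
  (forall t, is_derive f t (df t)) -> a <= b ->
  (forall t, a <= t <= b -> L <= df t) -> L * (b - a) <= f b - f a.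
Proof.
  intros f_derive a_le_b L_le.
  destruct (MVT_gen f a b df) as [c [c_in ->]].
  - intros; apply f_derive.
  - intros x _; apply continuity_pt_filterlim, (ex_derive_continuous (V := R_NormedModule)).
    exists (df x); apply f_derive.
  - rewrite Rmin_left, Rmax_right in c_in by lra.
    apply Rmult_le_compat_r; [lra | apply L_le; lra].
Qed.

Lemma derive_nonneg_le (f df : R -> R) (a b : R) :
  (forall t, is_derive f t (df t)) -> a <= b ->
  (forall t, a <= t <= b -> 0 <= df t) -> f a <= f b.
Proof.
  intros f_derive a_le_b df_ge0.
  enough (0 * (b - a) <= f b - f a) by lra.
  exact (MVT_lower_bound f df 0 a b f_derive a_le_b df_ge0).
Qed.

Lemma derive_ge_pos_unbounded (f df : R -> R) (L C : R) :
  (forall t, is_derive f t (df t)) -> 0 < L ->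
  (forall t, 0 <= t -> L <= df t) -> ~ (forall t, 0 <= t -> Rabs (f t) <= C).
Proof.
  intros f_derive L_pos L_le f_bounded.
  set (T := (2 * C + 1) / L).
  assert (C_nonneg : 0 <= C)
    by (apply Rle_trans with (Rabs (f 0)); [apply Rabs_pos | apply f_bounded; lra]).
  assert (T_pos : 0 < T) by (apply Rdiv_lt_0_compat; lra).
  assert (increment := MVT_lower_bound f df L 0 T f_derive (Rlt_le _ _ T_pos)
                         (fun t t_in => L_le t (proj1 t_in))).
  replace (L * (T - 0)) with (2 * C + 1) in increment by (unfold T; field; lra).
  assert (f_T := f_bounded T (Rlt_le _ _ T_pos)); assert (f_0 := f_bounded 0 (Rle_refl 0)).
  apply Rabs_le_between in f_T; apply Rabs_le_between in f_0.
  lra.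
Qed.

Lemma is_derive_mult_R (f g : R -> R) (x df dg : R) :
  is_derive f x df -> is_derive g x dg ->
  is_derive (fun t => f t * g t) x (df * g x + f x * dg).
Proof.
  intros f_derive g_derive; exact (is_derive_mult f g x df dg f_derive g_derive Rmult_comm).
Qed.

Lemma sum_ge_of_prod_ge (x y c : R) :
  0 < x -> 0 < y -> c <= x * y -> Rmin 1 (4 * c) <= x + y.
Proof.
  intros x_pos y_pos c_le.
  destruct (Rle_dec 1 (x + y)).
  - apply Rle_trans with 1; [apply Rmin_l | lra].
  - apply Rle_trans with (4 * c); [apply Rmin_r |].
    assert (0 <= (x - y) ^ 2) by apply pow2_ge_0.
    assert ((x + y) * (x + y) <= x + y) by nra.
    nra.
Qed.

Lemma is_lim_of_nonincreasing (f : R -> R) (l : R) :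
  (forall t0 t, t0 <= t -> f t <= f t0) -> (forall t, l <= f t) ->
  (forall eps, 0 < eps -> exists t, f t < l + eps) -> is_lim f p_infty l.
Proof.
  intros f_noninc l_le f_approx.
  apply is_lim_spec; intro eps; simpl.
  destruct (f_approx eps (cond_pos eps)) as [t0 f_t0].
  exists t0; intros t t0_lt_t.
  assert (f t <= f t0) by (apply f_noninc; lra).
  specialize (l_le t); apply Rabs_def1; lra.
Qed.

Lemma is_lim_0_of_sq_le (f g : R -> R) :
  is_lim g p_infty 0 -> (forall t, f t ^ 2 <= g t) -> is_lim f p_infty 0.
Proof.
  intros g_lim f_sq_le.
  apply is_lim_spec in g_lim; apply is_lim_spec; intro eps.
  assert (eps_sq_pos : 0 < eps ^ 2) by (apply pow_lt, cond_pos).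
  destruct (g_lim (mkposreal _ eps_sq_pos)) as [M g_small].
  exists M; intros t M_lt_t.
  specialize (g_small t M_lt_t); specialize (f_sq_le t); simpl in g_small |- *.
  rewrite Rminus_0_r in *.
  rewrite <- (Rabs_pos_eq eps) by (apply Rlt_le, cond_pos).
  apply Rsqr_lt_abs_0; unfold Rsqr.
  apply Rabs_lt_between in g_small; nra.
Qed.

Lemma sqrt3_bounds : 1 <= sqrt 3 <= 2.
Proof.
  split.
  - rewrite <- sqrt_1; apply sqrt_le_1_alt; lra.
  - rewrite <- (sqrt_pow2 2) by lra; apply sqrt_le_1_alt; lra.
Qed.

Lemma SmD_over_S_derive_ge (sp sm d s m : R) :
  0 < m -> m <= s -> sp ^ 2 + sm ^ 2 + 3 / 4 * d ^ 2 = 1 ->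
  2 * sqrt 3 * (1 - sp ^ 2) - (6 + 3 / m + 4 / m ^ 2) * d ^ 2 <=
  2 * sqrt 3 * sm ^ 2 - 3 * sqrt 3 / 2 * d ^ 2
  - 3 / 2 * d ^ 2 * (d * sm) / s - 2 * sqrt 3 * sm ^ 2 * d ^ 2 / s ^ 2.
Proof.
  intros m_pos m_le_s constraint.
  destruct sqrt3_bounds as [sqrt3_ge1 sqrt3_le2].
  assert (d_sq_nonneg : 0 <= d ^ 2) by apply pow2_ge_0.
  assert (sm_sq_le1 : sm ^ 2 <= 1) by nra.
  assert (d_sm_bound : Rabs (d * sm) <= 2) by (apply Rabs_le; split; nra).
  assert (inv_s_le : / s <= / m) by (apply Rinv_le_contravar; lra).
  assert (inv_s_sq_le : / s ^ 2 <= / m ^ 2)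
    by (apply Rinv_le_contravar; [nra | apply pow_incr; lra]).
  assert (cross_term : 3 / 2 * d ^ 2 * (d * sm) / s <= 3 * d ^ 2 / m).
  { unfold Rdiv; apply Rabs_le_between in d_sm_bound.
    assert (0 < / s) by (apply Rinv_0_lt_compat; lra).
    assert (d * sm * / s <= 2 * / m) by nra.
    nra. }
  assert (square_term : 2 * sqrt 3 * sm ^ 2 * d ^ 2 / s ^ 2 <= 4 * d ^ 2 / m ^ 2).
  { unfold Rdiv.
    assert (0 <= / s ^ 2) by (apply Rlt_le, Rinv_0_lt_compat; nra).
    assert (sqrt 3 * sm ^ 2 <= 2) by nra.
    assert (sqrt 3 * sm ^ 2 * / s ^ 2 <= 2 * / m ^ 2) by nra.
    nra. }
  replace (4 / m ^ 2) with (4 * / m ^ 2) in * by lra.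
  nra.
Qed.

Lemma damped_rate_ge (sp sp0 eps B d2 r : R) :
  0 < eps -> 0 < B -> 0 <= d2 -> -1 + eps <= sp -> sp <= sp0 -> sp0 <= 1 ->
  2 * sqrt 3 * (1 - sp ^ 2) - B * d2 <= r ->
  2 * ((1 - sp0) * eps) <= r - 2 * B / (3 * eps) * (- 3 / 2 * d2 * (1 + sp)).
Proof.
  intros eps_pos B_pos d2_nonneg sp_ge sp_le sp0_le1 r_ge.
  assert (ratio_ge1 : 1 <= (1 + sp) / eps)
    by (apply (Rmult_le_reg_r eps); [lra | field_simplify; lra]).
  replace (2 * B / (3 * eps) * (- 3 / 2 * d2 * (1 + sp)))
    with (- (B * d2 * ((1 + sp) / eps))) by (field; lra).
  assert (B * d2 <= B * d2 * ((1 + sp) / eps)).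
  { rewrite <- (Rmult_1_r (B * d2)) at 1.
    apply Rmult_le_compat_l; [apply Rmult_le_pos |]; lra. }
  assert ((1 - sp0) * eps <= (1 - sp) * (1 + sp)) by (apply Rmult_le_compat; lra).
  assert (0 <= (sqrt 3 - 1) * ((1 - sp) * (1 + sp)))
    by (destruct sqrt3_bounds; apply Rmult_le_pos; [| apply Rmult_le_pos]; lra).
  nra.
Qed.

Section BianchiVII0.

Variables N2 N3 Sp Sm : R -> R.

Hypothesis N2_pos : forall t, 0 < N2 t.
Hypothesis N3_pos : forall t, 0 < N3 t.
Hypothesis constraint : forall t, Sp t ^ 2 + Sm t ^ 2 + 3 / 4 * (N2 t - N3 t) ^ 2 = 1.
Hypothesis N2_derive : forall t,
  is_derive N2 t ((2 - 3 / 2 * (N2 t - N3 t) ^ 2 + 2 * Sp t + 2 * sqrt 3 * Sm t) * N2 t).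
Hypothesis N3_derive : forall t,
  is_derive N3 t ((2 - 3 / 2 * (N2 t - N3 t) ^ 2 + 2 * Sp t - 2 * sqrt 3 * Sm t) * N3 t).
Hypothesis Sp_derive : forall t,
  is_derive Sp t (- 3 / 2 * (N2 t - N3 t) ^ 2 * (1 + Sp t)).
Hypothesis Sm_derive : forall t,
  is_derive Sm t (- 3 / 2 * (N2 t - N3 t) ^ 2 * Sm t
                  - 3 * sqrt 3 / 2 * (N2 t - N3 t) * (N2 t + N3 t)).

Lemma Sp_bounds t : -1 <= Sp t <= 1.
Proof.
  specialize (constraint t).
  assert (0 <= Sm t ^ 2) by apply pow2_ge_0.
  assert (0 <= (N2 t - N3 t) ^ 2) by apply pow2_ge_0.
  split; nra.
Qed.

Lemma Sp_lt_1 t : ~ (N2 t = N3 t /\ Sm t = 0) -> Sp t < 1.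
Proof.
  intros not_fixed.
  destruct (Rlt_le_dec (Sp t) 1) as [|Sp_ge1]; [assumption | exfalso].
  apply not_fixed; specialize (Sp_bounds t); specialize (constraint t).
  assert (0 <= Sm t ^ 2) by apply pow2_ge_0.
  assert (0 <= (N2 t - N3 t) ^ 2) by apply pow2_ge_0.
  split; nra.
Qed.

Lemma Sp_nonincreasing t0 t : t0 <= t -> Sp t <= Sp t0.
Proof.
  intros t0_le_t.
  enough (- Sp t0 <= - Sp t) by lra.
  apply (derive_nonneg_le (fun t => - Sp t)
           (fun t => 3 / 2 * (N2 t - N3 t) ^ 2 * (1 + Sp t))); [| exact t0_le_t |].
  - intro t'; replace (3 / 2 * (N2 t' - N3 t') ^ 2 * (1 + Sp t'))
      with (- (- 3 / 2 * (N2 t' - N3 t') ^ 2 * (1 + Sp t'))) by field.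
    exact (is_derive_opp Sp t' _ (Sp_derive t')).
  - intros t' _; specialize (Sp_bounds t').
    assert (0 <= (N2 t' - N3 t') ^ 2) by apply pow2_ge_0.
    nra.
Qed.

Lemma SmD_over_S_derive t :
  is_derive (fun t => Sm t * (N2 t - N3 t) / (N2 t + N3 t)) t
    (2 * sqrt 3 * Sm t ^ 2 - 3 * sqrt 3 / 2 * (N2 t - N3 t) ^ 2
     - 3 / 2 * (N2 t - N3 t) ^ 2 * ((N2 t - N3 t) * Sm t) / (N2 t + N3 t)
     - 2 * sqrt 3 * Sm t ^ 2 * (N2 t - N3 t) ^ 2 / (N2 t + N3 t) ^ 2).
Proof.
  specialize (N2_pos t); specialize (N3_pos t).
  eapply eq_ind.
  - apply is_derive_div; [apply is_derive_mult_R; [apply Sm_derive |] | | lra].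
    + apply (is_derive_minus N2 N3); auto.
    + apply (is_derive_plus N2 N3); auto.
  - unfold minus, plus, opp; simpl; field; lra.
Qed.

Lemma SmD_over_S_bounded (m t : R) :
  0 < m -> m <= N2 t + N3 t -> Rabs (Sm t * (N2 t - N3 t) / (N2 t + N3 t)) <= 2 / m.
Proof.
  intros m_pos m_le_sum; assert (constraint_t := constraint t).
  assert (SmD_bound : Rabs (Sm t * (N2 t - N3 t)) <= 2).
  { apply Rabs_le; assert (0 <= Sp t ^ 2) by apply pow2_ge_0.
    assert (0 <= (Sm t - (N2 t - N3 t)) ^ 2) by apply pow2_ge_0.
    assert (0 <= (Sm t + (N2 t - N3 t)) ^ 2) by apply pow2_ge_0.
    split; nra. }
  unfold Rdiv; rewrite Rabs_mult, (Rabs_pos_eq (/ _)) by (apply Rlt_le, Rinv_0_lt_compat; lra).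
  apply Rmult_le_compat; try (apply Rabs_pos || lra).
  - apply Rlt_le, Rinv_0_lt_compat; lra.
  - apply Rinv_le_contravar; lra.
Qed.

Section SpBoundedAway.

Variable eps : R.
Hypothesis eps_pos : 0 < eps.
Hypothesis Sp_ge : forall t, -1 + eps <= Sp t.

Lemma N2N3_lower_bound : exists c, 0 < c /\ forall t, 0 <= t -> c <= N2 t * N3 t.
Proof.
  set (E := fun t => N2 t * N3 t * exp (- (2 / eps) * Sp t)).
  assert (E_pos : forall t, 0 < E t).
  { intro t; unfold E; specialize (N2_pos t); specialize (N3_pos t).
    assert (0 < exp (- (2 / eps) * Sp t)) by apply exp_pos.
    apply Rmult_lt_0_compat; [nra | assumption]. }
  assert (E_derive : forall t, is_derive E t
    (E t * (4 * (1 + Sp t) - 3 * (N2 t - N3 t) ^ 2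
            + 3 / eps * (N2 t - N3 t) ^ 2 * (1 + Sp t)))).
  { intro t; eapply eq_ind.
    - apply is_derive_mult_R; [apply is_derive_mult_R; auto |].
      exact (is_derive_comp exp (fun t => - (2 / eps) * Sp t) t _ _
               (is_derive_exp _) (is_derive_scal Sp t _ _ (Sp_derive t))).
    - unfold E, scal; simpl; unfold mult; simpl; field; lra. }
  (* The exponential weight is chosen so that [(1 + Sp) / eps >= 1] absorbs the [- 3 d^2] term. *)
  assert (E_nondecreasing : forall t, 0 <= t -> E 0 <= E t).
  { intros t t_nonneg; apply (derive_nonneg_le E _ 0 t E_derive t_nonneg).
    intros t' _; specialize (Sp_ge t'); specialize (E_pos t').
    assert (0 <= (N2 t' - N3 t') ^ 2) by apply pow2_ge_0.
    assert (ratio_ge1 : 1 <= (1 + Sp t') / eps)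
      by (apply (Rmult_le_reg_r eps); [lra | field_simplify; lra]).
    replace (3 / eps * (N2 t' - N3 t') ^ 2 * (1 + Sp t'))
      with (3 * (N2 t' - N3 t') ^ 2 * ((1 + Sp t') / eps)) by (field; lra).
    apply Rmult_le_pos; nra. }
  exists (E 0 * exp (- (2 / eps))); split.
  - apply Rmult_lt_0_compat; [apply E_pos | apply exp_pos].
  - intros t t_nonneg.
    replace (N2 t * N3 t) with (E t * exp (2 / eps * Sp t))
      by (unfold E; rewrite Rmult_assoc, <- exp_plus;
          replace (- (2 / eps) * Sp t + 2 / eps * Sp t) with 0 by ring;
          rewrite exp_0; ring).
    apply Rmult_le_compat; try (apply Rlt_le, exp_pos); [apply Rlt_le, E_pos | auto |].
    assert (0 < 2 / eps) by (apply Rdiv_lt_0_compat; lra).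
    destruct (proj1 (Sp_bounds t)) as [Sp_gt | <-].
    + apply Rlt_le, exp_increasing; nra.
    + apply Req_le; f_equal; ring.
Qed.

Lemma Sp_bounded_away_absurd : Sp 0 < 1 -> False.
Proof.
  intros Sp0_lt1.
  destruct N2N3_lower_bound as [c [c_pos c_le]].
  set (m := Rmin 1 (4 * c)).
  assert (m_pos : 0 < m) by (apply Rmin_pos; lra).
  assert (m_le_sum : forall t, 0 <= t -> m <= N2 t + N3 t)
    by (intros t t_nonneg; apply sum_ge_of_prod_ge; auto).
  set (B := 6 + 3 / m + 4 / m ^ 2).
  assert (B_pos : 0 < B).
  { unfold B; assert (0 < 3 / m) by (apply Rdiv_lt_0_compat; lra).
    assert (0 < 4 / m ^ 2) by (apply Rdiv_lt_0_compat; [lra | apply pow_lt; lra]).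
    lra. }
  set (k := 2 * B / (3 * eps)).
  assert (k_pos : 0 < k) by (apply Rdiv_lt_0_compat; lra).
  set (F := fun t => Sm t * (N2 t - N3 t) / (N2 t + N3 t) - k * Sp t).
  eapply (derive_ge_pos_unbounded F _ (2 * ((1 - Sp 0) * eps)) (2 / m + k)).
  - intro t; exact (is_derive_minus (fun t => Sm t * (N2 t - N3 t) / (N2 t + N3 t))
                      (fun t => k * Sp t) t _ _ (SmD_over_S_derive t)
                      (is_derive_scal Sp t k _ (Sp_derive t))).
  - apply Rmult_lt_0_compat; [lra | apply Rmult_lt_0_compat; lra].
  - intros t t_nonneg; cbv beta.
    match goal with |- _ <= minus ?x ?y => change (minus x y) with (x - y) end.
    apply (damped_rate_ge _ _ _ _ _ _ eps_pos B_pos (pow2_ge_0 _) (Sp_ge t)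
             (Sp_nonincreasing 0 t t_nonneg) (proj2 (Sp_bounds 0))).
    exact (SmD_over_S_derive_ge (Sp t) (Sm t) (N2 t - N3 t) (N2 t + N3 t) m
             m_pos (m_le_sum t t_nonneg) (constraint t)).
  - intros t t_nonneg; unfold F.
    assert (ratio_bound := SmD_over_S_bounded m t m_pos (m_le_sum t t_nonneg)).
    assert (Sp_bnd := Sp_bounds t).
    apply Rabs_le_between in ratio_bound; apply Rabs_le; nra.
Qed.

End SpBoundedAway.

Lemma Sp_approaches_minus1 :
  Sp 0 < 1 -> forall eps, 0 < eps -> exists t, Sp t < -1 + eps.
Proof.
  intros Sp0_lt1 eps eps_pos.
  apply NNPP; intro never_close.
  apply (Sp_bounded_away_absurd eps eps_pos); [| exact Sp0_lt1].
  intro t; apply Rnot_lt_le; intro close; apply never_close; exists t; exact close.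
Qed.

End BianchiVII0.

Section WainwrightHsuN1Zero.

Variables N1 N2 N3 Sp Sm : R -> R.

Hypothesis solution : WH_solution N1 N2 N3 Sp Sm.
Hypothesis constraint : WH_constraint N1 N2 N3 Sp Sm.
Hypothesis N1_zero : forall t, N1 t = 0.

Lemma WH_constraint_N1_zero t : Sp t ^ 2 + Sm t ^ 2 + 3 / 4 * (N2 t - N3 t) ^ 2 = 1.
Proof. rewrite <- (constraint t), N1_zero; ring. Qed.

Lemma WH_q_N1_zero t : WH_q (Sp t) (Sm t) = 2 - 3 / 2 * (N2 t - N3 t) ^ 2.
Proof. unfold WH_q; assert (C := WH_constraint_N1_zero t); lra. Qed.

Lemma N2_derive_N1_zero t :
  is_derive N2 t ((2 - 3 / 2 * (N2 t - N3 t) ^ 2 + 2 * Sp t + 2 * sqrt 3 * Sm t) * N2 t).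
Proof. rewrite <- WH_q_N1_zero; apply solution. Qed.

Lemma N3_derive_N1_zero t :
  is_derive N3 t ((2 - 3 / 2 * (N2 t - N3 t) ^ 2 + 2 * Sp t - 2 * sqrt 3 * Sm t) * N3 t).
Proof. rewrite <- WH_q_N1_zero; apply solution. Qed.

Lemma Sp_derive_N1_zero t : is_derive Sp t (- 3 / 2 * (N2 t - N3 t) ^ 2 * (1 + Sp t)).
Proof.
  eapply eq_ind; [apply solution |].
  rewrite WH_q_N1_zero, N1_zero; unfold WH_Splus; simpl; field.
Qed.

Lemma Sm_derive_N1_zero t :
  is_derive Sm t (- 3 / 2 * (N2 t - N3 t) ^ 2 * Sm t
                  - 3 * sqrt 3 / 2 * (N2 t - N3 t) * (N2 t + N3 t)).
Proof.
  eapply eq_ind; [apply solution |].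
  rewrite WH_q_N1_zero, N1_zero; unfold WH_Sminus; simpl; field.
Qed.

End WainwrightHsuN1Zero.

Theorem mainTheorem8 (N1 N2 N3 Sp Sm : R -> R) :
  WH_solution N1 N2 N3 Sp Sm ->
  WH_constraint N1 N2 N3 Sp Sm ->
  (forall t, N1 t = 0) ->
  (forall t, 0 < N2 t) ->
  (forall t, 0 < N3 t) ->
  (forall t, ~ (N2 t = N3 t /\ Sm t = 0)) ->
  is_lim Sp p_infty (-1) /\
  is_lim Sm p_infty 0 /\
  is_lim (fun t => N2 t - N3 t) p_infty 0.
Proof.
  intros solution constraint N1_zero N2_pos N3_pos not_fixed.
  assert (constraint' := WH_constraint_N1_zero N1 N2 N3 Sp Sm constraint N1_zero).
  assert (Sp_derive := Sp_derive_N1_zero N1 N2 N3 Sp Sm solution constraint N1_zero).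
  assert (Sp_lim : is_lim Sp p_infty (-1)).
  { apply is_lim_of_nonincreasing.
    - exact (Sp_nonincreasing N2 N3 Sp Sm constraint' Sp_derive).
    - intro t; apply (Sp_bounds N2 N3 Sp Sm constraint').
    - apply (Sp_approaches_minus1 N2 N3 Sp Sm N2_pos N3_pos constraint');
        eauto using N2_derive_N1_zero, N3_derive_N1_zero, Sm_derive_N1_zero.
      exact (Sp_lt_1 N2 N3 Sp Sm constraint' 0 (not_fixed 0)). }
  (* By the constraint, [Sm^2 + 3/4 (N2 - N3)^2 = 1 - Sp^2 <= 2 (1 + Sp)], which tends to 0. *)
  assert (gap_lim : is_lim (fun t => 8 / 3 * (1 + Sp t)) p_infty 0).
  { replace (Finite 0) with (Rbar_mult (8 / 3) (Rbar_plus 1 (-1))) by (simpl; f_equal; ring).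
    apply is_lim_scal_l, is_lim_plus'; [apply is_lim_const | exact Sp_lim]. }
  split; [exact Sp_lim | split]; apply (is_lim_0_of_sq_le _ _ gap_lim); intro t;
    assert (Sp_bnd := Sp_bounds N2 N3 Sp Sm constraint' t); specialize (constraint' t);
    assert (0 <= Sm t ^ 2) by apply pow2_ge_0;
    assert (0 <= (N2 t - N3 t) ^ 2) by apply pow2_ge_0; nra.
Qed.
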